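(* On each chart of $\mathbb O'P^2$ with coordinates $(u,v)$ (satisfying $1+|u|^2+|v|^2>0$), the symmetric bilinear form whose quadratic form on tangent vectors $(du,dv)=(\xi,\eta)\in\mathbb O'^2$ is $$ds^2=\frac{|\xi|^2(1+|v|^2)+|\eta|^2(1+|u|^2)-2\mathrm{Re}\big[(u\bar v)(\eta\bar\xi)\big]}{(1+|u|^2+|v|^2)^2}$$ is non-degenerate of signature $(8,8)$ at every point.
   Context: Para-octonions $\mathbb O'=\mathbb H\oplus\mathbb H$ with product $(q_1,q_2)(p_1,p_2)=(q_1p_1+\bar p_2q_2,\ p_2q_1+q_2\bar p_1)$, conjugation $\overline{(q_1,q_2)}=(\bar q_1,-q_2)$, $\langle a,b\rangle=\mathrm{Re}(a\bar b)$, $|a|^2=\langle a,a\rangle$ (a form of signature $(4,4)$). $\mathbb O'P^2=\mathcal U/_\sim$ where $\mathcal U=\{(1,y,z):1+|y|^2+|z|^2>0\}\cup\{(x,1,z):|x|^2+1+|z|^2>0\}\cup\{(x,y,1):|x|^2+|y|^2+1>0\}$ and $[a,b,c]\sim[d,e,f]$ iff $(a,b,c)=(d\lambda,e\lambda,f\lambda)$ for some $\lambda$ with $|\lambda|^2>0$; charts $[1,u,v]\mapsto(u,v)$, $[u,1,v]\mapsto(u,v)$, $[u,v,1]\mapsto(u,v)$. *)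

(* Para-octonions O' = H (+) H over a real closed field R. *)
From HB Require Import structures.
From mathcomp Require Import all_boot all_order all_algebra.
Set Implicit Arguments. Unset Strict Implicit. Unset Printing Implicit Defensive.
Import Order.TTheory GRing.Theory Num.Theory.
Local Open Scope ring_scope.

Section ParaOct.
Variable R : rcfType.

Record quat := Quat { qa : R; qb : R; qc : R; qd : R }.

Definition qadd (p q : quat) :=
  Quat (qa p + qa q) (qb p + qb q) (qc p + qc q) (qd p + qd q).
Definition qopp (p : quat) := Quat (- qa p) (- qb p) (- qc p) (- qd p).
Definition qconj (p : quat) := Quat (qa p) (- qb p) (- qc p) (- qd p).
Definition qmul (p q : quat) :=
  Quat (qa p * qa q - qb p * qb q - qc p * qc q - qd p * qd q)
       (qa p * qb q + qb p * qa q + qc p * qd q - qd p * qc q)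
       (qa p * qc q - qb p * qd q + qc p * qa q + qd p * qb q)
       (qa p * qd q + qb p * qc q - qc p * qb q + qd p * qa q).
Definition qre (p : quat) := qa p.

Record poct := POct { o1 : quat; o2 : quat }.

Definition omul (x y : poct) :=
  POct (qadd (qmul (o1 x) (o1 y)) (qmul (qconj (o2 y)) (o2 x)))
       (qadd (qmul (o2 y) (o1 x)) (qmul (o2 x) (qconj (o1 y)))).
Definition oadd (x y : poct) := POct (qadd (o1 x) (o1 y)) (qadd (o2 x) (o2 y)).
Definition oconj (x : poct) := POct (qconj (o1 x)) (qopp (o2 x)).
Definition ore (x : poct) := qre (o1 x).
Definition oinner (x y : poct) := ore (omul x (oconj y)).
Definition onorm2 (x : poct) := oinner x x.

Definition ds2 (u v xi eta : poct) : R :=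
  (onorm2 xi * (1 + onorm2 v) + onorm2 eta * (1 + onorm2 u)
    - 2 * ore (omul (omul u (oconj v)) (omul eta (oconj xi))))
  / (1 + onorm2 u + onorm2 v) ^+ 2.

(* Real coordinates: a tangent vector (xi,eta) in O'^2 = R^16 *)
Definition cf (x : 'rV[R]_16) (k : nat) : R := x 0 (inord k).
Definition quat_of (x : 'rV[R]_16) (k : nat) : quat :=
  Quat (cf x k) (cf x k.+1) (cf x k.+2) (cf x k.+3).
Definition tan_xi (x : 'rV[R]_16) : poct := POct (quat_of x 0) (quat_of x 4).
Definition tan_eta (x : 'rV[R]_16) : poct := POct (quat_of x 8) (quat_of x 12).

Definition ds2_vec (u v : poct) (x : 'rV[R]_16) : R :=
  ds2 u v (tan_xi x) (tan_eta x).

Definition ds2_bil (u v : poct) (x y : 'rV[R]_16) : R :=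
  (ds2_vec u v (x + y) - ds2_vec u v x - ds2_vec u v y) / 2.

Definition ds2_gram (u v : poct) : 'M[R]_16 :=
  \matrix_(i, j) ds2_bil u v (delta_mx 0 i) (delta_mx 0 j).

End ParaOct.

(* Signature (p,q) of a symmetric matrix G of size p+q with no null part:
   G is congruent to diag(1,...,1,-1,...,-1) (p ones, q minus ones)
   (Sylvester normal form). *)
Definition sylv_diag (R : rcfType) (p q : nat) : 'M[R]_(p + q) :=
  diag_mx (\row_(i < p + q) (if (i < p)%N then 1 else -1)).

Definition nondeg_signature (R : rcfType) (p q : nat) (G : 'M[R]_(p + q)) : Prop :=
  G^T = G /\ \det G != 0 /\
  exists2 P : 'M[R]_(p + q), P \in unitmx & P^T *m G *m P = sylv_diag R p q.
Arguments nondeg_signature {R} p q G.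

From mathcomp Require Import all_boot all_order all_algebra.
From mathcomp Require Import ring lra zify.
Set Implicit Arguments. Unset Strict Implicit. Unset Printing Implicit Defensive.
Import Order.TTheory GRing.Theory Num.Theory.
Local Open Scope ring_scope.

(* Polarise the numerator of ds^2 to the symmetric bilinear form on O'^2
     Q((x,y),(x',y')) = c<x,x'> + c'<y,y'> - <a y,x'> - <a y',x>,
   with c = 1 + |v|^2, c' = 1 + |u|^2 and a = u conj(v).  As O' is a composition
   algebra, |a|^2 = |u|^2 |v|^2, so c c' - |a|^2 = D := 1 + |u|^2 + |v|^2 > 0.
   If c <> 0, completing the square gives
     Q((x,y),(x,y)) = c |x - a y / c|^2 + (D / c) |y|^2,
   an orthogonal sum of two copies of the (4,4) norm form of O' rescaled by
   factors of the sign of c; rescaling an orthonormal basis of O' in each copy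
   yields 16 Q-orthonormal vectors, 8 of each sign.  Since c + c' = D + 1 > 0,
   c and c' do not both vanish, and if c = 0 exchanging xi and eta reduces to
   the first case.  Finally ds^2 = Q / D^2. *)

Definition sgnb (R : rcfType) (b : bool) : R := if b then 1 else -1.
Arguments sgnb {R}.

Lemma normr_div_sgnb (R : rcfType) (c : R) : c != 0 -> `|c| / c = sgnb (0 < c).
Proof.
move=> c_neq0; rewrite /sgnb.
case: (ltrgtP 0 c) => [c_gt0 | c_lt0 | c_eq0]; last by rewrite -c_eq0 eqxx in c_neq0.
- by rewrite gtr0_norm // divff.
- by rewrite ltr0_norm // mulNr divff.
Qed.

Section ParaOctonionAlgebra.
Variable R : rcfType.
Implicit Types (a x y z w : poct R) (k : R).

Definition ozero : poct R := POct (Quat 0 0 0 0) (Quat 0 0 0 0).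

Definition oscale k x :=
  POct (Quat (k * qa (o1 x)) (k * qb (o1 x)) (k * qc (o1 x)) (k * qd (o1 x)))
       (Quat (k * qa (o2 x)) (k * qb (o2 x)) (k * qc (o2 x)) (k * qd (o2 x))).

Ltac poct_ring :=
  repeat match goal with x : poct R |- _ => move: x => [[? ? ? ?] [? ? ? ?]] end;
  cbv beta iota delta [oinner onorm2 omul oconj ore qre qadd qmul qconj qopp
                       o1 o2 qa qb qc qd oadd oscale ozero];
  first [ring | congr (POct (Quat _ _ _ _) (Quat _ _ _ _)); ring].

Lemma oinnerC x y : oinner x y = oinner y x.
Proof. poct_ring. Qed.

Lemma oinnerDl x y z : oinner (oadd x y) z = oinner x z + oinner y z.
Proof. poct_ring. Qed.

Lemma oinnerZl k x y : oinner (oscale k x) y = k * oinner x y.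
Proof. poct_ring. Qed.

Lemma oinner0l y : oinner ozero y = 0.
Proof. poct_ring. Qed.

Lemma oinner0r y : oinner y ozero = 0.
Proof. poct_ring. Qed.

Lemma omulDr a y z : omul a (oadd y z) = oadd (omul a y) (omul a z).
Proof. poct_ring. Qed.

Lemma omulZr a k y : omul a (oscale k y) = oscale k (omul a y).
Proof. poct_ring. Qed.

Lemma omul0 a : omul a ozero = ozero.
Proof. poct_ring. Qed.

Lemma ore_omul_conj a y w : ore (omul a (omul y (oconj w))) = oinner (omul a y) w.
Proof. poct_ring. Qed.

Lemma oinner_omul2 a y z : oinner (omul a y) (omul a z) = onorm2 a * oinner y z.
Proof. poct_ring. Qed.

Lemma oinner_oconj_omul a y z : oinner (omul (oconj a) y) z = oinner y (omul a z).
Proof. poct_ring. Qed.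

Lemma onorm2_oconj x : onorm2 (oconj x) = onorm2 x.
Proof. poct_ring. Qed.

Lemma oinnerZr k x y : oinner x (oscale k y) = k * oinner x y.
Proof. by rewrite oinnerC oinnerZl oinnerC. Qed.

Lemma oinnerDr x y z : oinner x (oadd y z) = oinner x y + oinner x z.
Proof. by rewrite oinnerC oinnerDl !(oinnerC x). Qed.

Lemma onorm2_omul x y : onorm2 (omul x y) = onorm2 x * onorm2 y.
Proof. exact: oinner_omul2. Qed.

Definition qunit (k : nat) : quat R :=
  Quat (k == 0)%N%:R (k == 1)%N%:R (k == 2)%N%:R (k == 3)%N%:R.

Definition obasis (positive : bool) (k : nat) : poct R :=
  let qzero := Quat 0 0 0 0 in
  if positive then POct (qunit k) qzero else POct qzero (qunit k).

Lemma oinner_obasis s s' (m m' : nat) : (m < 4)%N -> (m' < 4)%N ->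
  oinner (obasis s m) (obasis s' m') =
  if (s == s') && (m == m') then sgnb s else 0.
Proof.
case: m => [|[|[|[|m]]]] // _; case: m' => [|[|[|[|m']]]] // _;
  by case: s; case: s'; rewrite /obasis /qunit /sgnb /=; poct_ring.
Qed.

End ParaOctonionAlgebra.

Arguments obasis {R}.

Section SplitForm.
Variables (R : rcfType) (c c' : R) (a : poct R).
Implicit Types (p q : poct R * poct R) (e : poct R).

Definition oform p q : R :=
  c * oinner p.1 q.1 + c' * oinner p.2 q.2
  - oinner (omul a p.2) q.1 - oinner (omul a q.2) p.1.

Lemma oformC p q : oform p q = oform q p.
Proof. by rewrite /oform (oinnerC p.1) (oinnerC p.2); ring. Qed.

Hypothesis c_neq0 : c != 0.

Definition oframe (lambda mu : R) (first : bool) e : poct R * poct R :=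
  if first then (oscale lambda e, ozero R)
  else (oscale (mu / c) (omul a e), oscale mu e).

Lemma oform_oframe lambda mu h h' e e' :
  oform (oframe lambda mu h e) (oframe lambda mu h' e') =
  if h == h' then (if h then c * lambda ^+ 2 else mu ^+ 2 * (c * c' - onorm2 a) / c)
                  * oinner e e'
  else 0.
Proof.
rewrite /oform; case: h; case: h' => /=;
  rewrite ?(oinner0l, oinner0r, omul0, oinnerZl, oinnerZr, omulZr).
- by field.
- by rewrite (oinnerC e); field.
- by field.
- by rewrite !oinner_omul2 (oinnerC e'); field.
Qed.

Lemma oframe_scalings : 0 < c * c' - onorm2 a ->
  exists lambda mu : R,
    c * lambda ^+ 2 = sgnb (0 < c) /\ mu ^+ 2 * (c * c' - onorm2 a) / c = sgnb (0 < c).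
Proof.
set d := c * c' - onorm2 a => d_gt0.
exists (Num.sqrt `|c| / c), (Num.sqrt (`|c| / d)).
rewrite -normr_div_sgnb // !expr_div_n !sqr_sqrtr ?divr_ge0 ?(ltW d_gt0) //.
by split; field; rewrite ?c_neq0 ?gt_eqF.
Qed.

Lemma oform_orthonormal_frameL : 0 < c * c' - onorm2 a ->
  exists F : bool -> poct R -> poct R * poct R, forall h h' e e',
    oform (F h e) (F h' e') = if h == h' then sgnb (0 < c) * oinner e e' else 0.
Proof.
case/oframe_scalings => lambda [mu [lambda_unit mu_unit]].
exists (oframe lambda mu) => h h' e e'.
by rewrite oform_oframe; case: h; case: h' => //=; rewrite ?lambda_unit ?mu_unit.
Qed.

End SplitForm.

Lemma oform_swap (R : rcfType) (c c' : R) a p q :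
  oform c c' a p q = oform c' c (oconj a) (p.2, p.1) (q.2, q.1).
Proof.
rewrite /oform /= !oinner_oconj_omul (oinnerC p.1 (omul _ _)) (oinnerC q.1 (omul _ _)).
by ring.
Qed.

Lemma oform_orthonormal_frame (R : rcfType) (c c' : R) a :
  (c != 0) || (c' != 0) -> 0 < c * c' - onorm2 a ->
  exists (F : bool -> poct R -> poct R * poct R) (b : bool), forall h h' e e',
    oform c c' a (F h e) (F h' e') = if h == h' then sgnb b * oinner e e' else 0.
Proof.
case/orP=> [c_neq0 | c'_neq0] d_gt0.
  by have [F F_frame] := oform_orthonormal_frameL c_neq0 d_gt0; exists F, (0 < c).
have d'_gt0 : 0 < c' * c - onorm2 (oconj a) by rewrite onorm2_oconj mulrC.
have [F F_frame] := oform_orthonormal_frameL c'_neq0 d'_gt0.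
exists (fun h e => ((F h e).2, (F h e).1)), (0 < c') => h h' e e'.
by rewrite oform_swap -F_frame; case: (F h e); case: (F h' e').
Qed.

Section GramMatrix.
Variables (R : comPzRingType) (n : nat) (f : 'rV[R]_n -> 'rV[R]_n -> R).
Hypotheses (f_linear : forall k x y z, f (k *: x + y) z = k * f x z + f y z)
           (f_sym : forall x y, f x y = f y x).

Definition gram_mx : 'M[R]_n := \matrix_(i, j) f (delta_mx 0 i) (delta_mx 0 j).

Lemma gram_mx_tr : gram_mx^T = gram_mx.
Proof. by apply/matrixP => i j; rewrite !mxE f_sym. Qed.

Lemma form0l z : f 0 z = 0.
Proof.
have := f_linear 1 0 0 z; rewrite scale1r addr0 mul1r => f0_double.
by apply: (addrI (f 0 z)); rewrite addr0 -f0_double.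
Qed.

Lemma formZl k x z : f (k *: x) z = k * f x z.
Proof. by rewrite -[k *: x]addr0 f_linear form0l addr0. Qed.

Lemma form_expandl x z : f x z = \sum_k x 0 k * f (delta_mx 0 k) z.
Proof.
rewrite {1}(row_sum_delta x).
by elim/big_rec2: _ => [|k s1 s2 _ <-]; [exact: form0l | exact: f_linear].
Qed.

Lemma gram_mx_congr (F : 'I_n -> 'rV[R]_n) :
  (\matrix_i F i) *m gram_mx *m (\matrix_i F i)^T = \matrix_(i, j) f (F i) (F j).
Proof.
apply/matrixP => i j; rewrite !mxE form_expandl.
under eq_bigr => l _ do rewrite !mxE.
under [RHS]eq_bigr => k _ do rewrite f_sym form_expandl mulr_sumr.
rewrite exchange_big /=; apply: eq_bigr => l _; rewrite mulr_suml.
by apply: eq_bigr => k _; rewrite !mxE f_sym; ring.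
Qed.

End GramMatrix.

Lemma nondeg_signature_congr (R : rcfType) p q (G P : 'M[R]_(p + q)) :
  G^T = G -> P^T *m G *m P = sylv_diag R p q -> nondeg_signature p q G.
Proof.
move=> G_sym congr_GP.
have det_sylv_neq0 : \det (sylv_diag R p q) != 0.
  rewrite det_diag; apply/prodf_neq0 => i _; rewrite mxE.
  by case: ifP => _; rewrite ?oppr_eq0 oner_eq0.
have := congr1 determinant congr_GP; rewrite !det_mulmx det_tr => det_congr.
split => //; split.
  by apply: contraNneq det_sylv_neq0 => detG0; rewrite -det_congr detG0 mulr0 mul0r.
exists P => //; rewrite unitmxE unitfE.
by apply: contraNneq det_sylv_neq0 => detP0; rewrite -det_congr detP0 !mul0r.
Qed.

Lemma ord16_split_eq (i j : 'I_16) :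
  [&& (i < 8) == (j < 8), (i %% 8 < 4) == (j %% 8 < 4) & i %% 4 == j %% 4]%N = (i == j).
Proof.
case: i j => [i lt_i16] [j lt_j16] /=; apply/idP/eqP => [|[->]]; last by rewrite !eqxx.
by case/and3P => /eqP eq_hi /eqP eq_mid /eqP eq_lo; apply: val_inj => /=; lia.
Qed.

Section Chart.
Variables (R : rcfType) (u v : poct R).
Local Notation D := (1 + onorm2 u + onorm2 v).

Definition ds2_form (x y : 'rV[R]_16) : R :=
  oform (1 + onorm2 v) (1 + onorm2 u) (omul u (oconj v))
        (tan_xi x, tan_eta x) (tan_xi y, tan_eta y).

Lemma tan_xiP k (x y : 'rV[R]_16) :
  tan_xi (k *: x + y) = oadd (oscale k (tan_xi x)) (tan_xi y).
Proof. by rewrite /tan_xi /oadd /oscale /quat_of /qadd /cf !mxE. Qed.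

Lemma tan_etaP k (x y : 'rV[R]_16) :
  tan_eta (k *: x + y) = oadd (oscale k (tan_eta x)) (tan_eta y).
Proof. by rewrite /tan_eta /oadd /oscale /quat_of /qadd /cf !mxE. Qed.

Lemma ds2_formC x y : ds2_form x y = ds2_form y x.
Proof. exact: oformC. Qed.

Lemma ds2_form_linear k x y z : ds2_form (k *: x + y) z = k * ds2_form x z + ds2_form y z.
Proof.
rewrite /ds2_form /oform /= tan_xiP tan_etaP.
by rewrite omulDr omulZr !oinnerDl !oinnerZl !oinnerDr !oinnerZr; ring.
Qed.

Lemma ds2_vecE x : ds2_vec u v x = ds2_form x x / D ^+ 2.
Proof.
rewrite /ds2_vec /ds2 ore_omul_conj /ds2_form /oform /=.
by congr (_ / _); rewrite /onorm2; ring.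
Qed.

Lemma ds2_bilE x y : ds2_bil u v x y = ds2_form x y / D ^+ 2.
Proof.
have ds2_formDl x1 x2 z : ds2_form (x1 + x2) z = ds2_form x1 z + ds2_form x2 z.
  by have := ds2_form_linear 1 x1 x2 z; rewrite scale1r mul1r.
rewrite /ds2_bil !ds2_vecE ds2_formDl !(ds2_formC _ (x + y)) !ds2_formDl (ds2_formC y x).
by set w := (D ^+ 2)^-1; field.
Qed.

Lemma ds2_bil_linear k x y z :
  ds2_bil u v (k *: x + y) z = k * ds2_bil u v x z + ds2_bil u v y z.
Proof. by rewrite !ds2_bilE ds2_form_linear mulrDl mulrA. Qed.

Lemma ds2_bilC x y : ds2_bil u v x y = ds2_bil u v y x.
Proof. by rewrite !ds2_bilE ds2_formC. Qed.

Definition ocoords (x : poct R) : seq R :=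
  [:: qa (o1 x); qb (o1 x); qc (o1 x); qd (o1 x);
      qa (o2 x); qb (o2 x); qc (o2 x); qd (o2 x)].

Definition tan_vec (p : poct R * poct R) : 'rV[R]_16 :=
  \row_(k < 16) nth 0 (ocoords p.1 ++ ocoords p.2) k.

Lemma tan_vecK p : (tan_xi (tan_vec p), tan_eta (tan_vec p)) = p.
Proof.
case: p => [[[? ? ? ?] [? ? ? ?]] [[? ? ? ?] [? ? ? ?]]].
by rewrite /tan_xi /tan_eta /quat_of /cf !mxE !inordK.
Qed.

Lemma ds2_bil_tan_vec p q : D != 0 ->
  ds2_bil u v (D *: tan_vec p) (D *: tan_vec q) =
  oform (1 + onorm2 v) (1 + onorm2 u) (omul u (oconj v)) p q.
Proof.
move=> D_neq0; have ds2_formZl := formZl ds2_form_linear.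
rewrite ds2_bilE ds2_formZl ds2_formC ds2_formZl ds2_formC /ds2_form !tan_vecK.
by field.
Qed.

Lemma ds2_bil_orthonormal_basis : 0 < D ->
  exists F : 'I_16 -> 'rV[R]_16, forall i j, ds2_bil u v (F i) (F j) = sylv_diag R 8 8 i j.
Proof.
move=> D_gt0.
have disc : (1 + onorm2 v) * (1 + onorm2 u) - onorm2 (omul u (oconj v)) = D.
  by rewrite onorm2_omul onorm2_oconj; ring.
have c_or_c' : (1 + onorm2 v != 0) || (1 + onorm2 u != 0).
  by case: eqP => [c_eq0 | //] /=; apply/eqP => c'_eq0; lra.
have := oform_orthonormal_frame (a := omul u (oconj v)) c_or_c'.
rewrite disc => /(_ D_gt0)[G [b G_frame]].
(* [i] encodes the sign [i < 8] of the target, the copy [i %% 8 < 4] of O' and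
   the quaternion unit [i %% 4]; the basis vector of O' is chosen with sign
   [(i < 8) == b] so that, after the factor [sgnb b], the sign is [i < 8]. *)
exists (fun i : 'I_16 =>
  D *: tan_vec (G (i %% 8 < 4)%N (obasis ((i < 8)%N == b) (i %% 4)))).
move=> i j /=; rewrite ds2_bil_tan_vec ?lt0r_neq0 // G_frame oinner_obasis ?ltn_pmod //.
rewrite /sylv_diag !mxE -ord16_split_eq.
move: (i < 8)%N (j < 8)%N ((i %% 8 < 4) == (j %% 8 < 4))%N (i %% 4 == j %% 4)%N.
move=> {G_frame} t t' eh em.
by case: b t t' eh em => [] [] [] [] []; rewrite /sgnb /= ?mulr0 ?mul1r ?mulN1r ?opprK.
Qed.

End Chart.

Theorem proposition6p5 (R : rcfType) (u v : poct R) :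
  0 < 1 + onorm2 u + onorm2 v ->
  nondeg_signature 8 8 (ds2_gram u v).
Proof.
move=> D_gt0.
have [F F_orthonormal] := ds2_bil_orthonormal_basis D_gt0.
have ds2_gramE : ds2_gram u v = gram_mx (ds2_bil u v) by [].
have [bil_linear bil_sym] := (ds2_bil_linear u v, ds2_bilC u v).
apply: (@nondeg_signature_congr R 8 8 _ (\matrix_i F i)^T).
  by rewrite ds2_gramE (gram_mx_tr bil_sym).
rewrite trmxK ds2_gramE (gram_mx_congr bil_linear bil_sym).
by apply/matrixP => i j; rewrite mxE F_orthonormal.
Qed.
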